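(* Let $n\ge 1$ be an integer and let $M_{8n}=\langle a,b : a^4=b^{2n}=1,\ bab^{-1}=a^{-1}\rangle$ be the metacyclic group of order $8n$. Let $\Gamma_{M_{8n}}$ be its non-commuting graph. Then the spectrum of the distance signless Laplacian matrix $D^Q(\Gamma_{M_{8n}})$ (eigenvalues counted with multiplicity, multiplicities being added if two of the listed values coincide) consists of: (a) $8n-4$ with multiplicity $3(2n-1)$; (b) $10n-4$ with multiplicity $2$; (c) $16n-4$ with multiplicity $1$.
   Context: For a finite non-abelian group $G$ with centre $Z(G)$, the non-commuting graph $\Gamma_G$ is the simple undirected graph with vertex set $G\setminus Z(G)$, in which two distinct vertices $u,v$ are adjacent if and only if $uv\ne vu$. For a connected graph $H$, $d_{uv}$ denotes the length of a shortest path between $u$ and $v$; the distance matrix $D(H)$ has $(u,v)$-entry $d_{uv}$. The transmission of a vertex $v$ is $\sum_{u} d_{uv}$, and $Tr(H)$ is the diagonal matrix of vertex transmissions. The distance signless Laplacian matrix is $D^Q(H)=Tr(H)+D(H)$. *)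

From mathcomp Require Import all_boot all_order all_algebra all_fingroup all_solvable.
Set Implicit Arguments. Unset Strict Implicit. Unset Printing Implicit Defensive.
Import GRing.Theory.
Local Open Scope ring_scope.

Section GraphMatrices.
Variables (T : finType) (V : {set T}) (e : rel T).

Fixpoint walkb (k : nat) (u v : T) : bool :=
  if k is k'.+1 then [exists w in V, e u w && walkb k' w v] else u == v.

(* graph distance: least k with a k-step walk (searched in 0..#|V|-1, which
   suffices for a connected graph on V) *)
Definition gdist (u v : T) : nat := find (fun k => walkb k u v) (iota 0 #|V|).

Definition dist_mx : 'M[int]_#|V| :=
  \matrix_(i, j) (gdist (enum_val i) (enum_val j))%:Z.

Definition trans_mx : 'M[int]_#|V| :=
  diag_mx (\row_(j < #|V|) \sum_(i < #|V|) dist_mx i j).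

Definition dsl_mx : 'M[int]_#|V| := trans_mx + dist_mx.
End GraphMatrices.

Definition nc_vertices (gT : finGroupType) (G : {group gT}) : {set gT} :=
  (G :\: 'Z(G))%g.
Definition nc_adj (gT : finGroupType) : rel gT :=
  fun x y => (x != y) && (x * y != y * x)%g.

(* The centre Z of G = M_{8n} contains a^2 and b^2, so every element lies in one of
   the cosets Z, Za, Zb, Zab; as G is non-abelian, [G : Z] = 4 and |Z| = 2n.  When
   [G : Z] = 4, a non-central x satisfies Z < C_G(x) < G, hence [C_G(x) : Z] = 2 and
   C_G(x) = Z u Zx: two non-central elements commute iff they lie in the same coset
   of Z.  So the non-commuting graph is the complete 3-partite graph whose parts are
   the three non-central cosets of Z.  In a complete k-partite graph with parts of
   size m, distances are 1 across parts and 2 inside a part, so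
   D^Q = (km + m - 4) I + U (I + J) U^T with U the vertex/part incidence matrix and
   U^T U = m I.  Sylvester's identity det(Y - U W) Y^k = Y^N det(Y - W U) reduces the
   characteristic polynomial to that of m (I + J), of spectrum m^(k-1), m (k + 1). *)

From mathcomp Require Import all_boot all_order all_algebra all_fingroup all_solvable.
From mathcomp Require Import zify ring.
Set Implicit Arguments. Unset Strict Implicit. Unset Printing Implicit Defensive.
Import GRing.Theory.

Section DeterminantIdentities.
Local Open Scope ring_scope.

Lemma det_sylvester (R : comPzRingType) N k (U : 'M[R]_(N, k)) (V : 'M[R]_(k, N)) (Y : R) :
  \det (Y%:M - U *m V) * Y ^+ k = Y ^+ N * \det (Y%:M - V *m U).
Proof.
pose M := block_mx (Y%:M : 'M_N) U V (1%:M : 'M_k).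
have lowerM : M = block_mx 1%:M U 0 1%:M *m block_mx (Y%:M - U *m V) 0 V 1%:M.
  by rewrite mulmx_block !mul1mx !mul0mx !mulmx1 !add0r subrK.
have upperM : block_mx 1%:M 0 (- V) Y%:M *m M = block_mx Y%:M U 0 (Y%:M - V *m U).
  rewrite mulmx_block !mul1mx !mul0mx !addr0 mulNmx mul_mx_scalar mul_scalar_mx addNr.
  by rewrite mulmx1 addrC mulNmx.
have := congr1 determinant upperM.
rewrite det_mulmx det_lblock det_ublock det1 mul1r !det_scalar lowerM det_mulmx.
by rewrite det_ublock det_lblock !det1 !mul1r mulr1 mulrC.
Qed.

Lemma det_scalar_sub_const (R : comPzRingType) k (Y c : R) :
  \det (Y%:M - const_mx c : 'M_k) * Y = Y ^+ k * (Y - c *+ k).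
Proof.
have -> : const_mx c = const_mx 1 *m (const_mx c : 'M_(1, k)) :> 'M_k.
  by apply/matrixP => i j; rewrite !mxE big_ord1 !mxE mul1r.
rewrite -[Y in _ * Y]expr1 det_sylvester det_mx11 !mxE.
rewrite (eq_bigr (fun _ => c)) ?sumr_const ?card_ord // => j _.
by rewrite !mxE mulr1.
Qed.

End DeterminantIdentities.

(** * Distance signless Laplacian of complete multipartite graphs *)

Section Distance.
Variables (T : finType) (V : {set T}) (e : rel T).
Local Open Scope ring_scope.

Lemma walkb1 u v : walkb V e 1%N u v = e u v && (v \in V).
Proof.
apply/existsP/andP => [[w /and3P[wV euw /eqP <-]] // | [euv vV]].
by exists v; rewrite vV euv eqxx.
Qed.

Lemma gdist_eq u v k :
  (k < #|V|)%N -> walkb V e k u v -> (forall j, (j < k)%N -> ~~ walkb V e j u v) ->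
  gdist V e u v = k.
Proof.
move=> ltkV walk_k walk_lt.
have no_early : ~~ has (fun j => walkb V e j u v) (iota 0 k).
  by apply/hasPn => j; rewrite mem_iota => /andP[_ /walk_lt].
rewrite /gdist -(subnKC (ltnW ltkV)) iotaD find_cat (negbTE no_early) size_iota.
by rewrite -subnSK //= walk_k addn0.
Qed.

Lemma sum_enum_val_mem (A : {set T}) : A \subset V ->
  \sum_(i < #|V|) ((enum_val i \in A)%:R : int) = #|A|%:R.
Proof.
move=> sAV; rewrite -(big_enum_val (fun x => ((x \in A)%:R : int))) (big_setID A) /=.
rewrite (setIidPr sAV) [X in _ + X]big1 => [|x /setDP[_ /negbTE ->] //].
by rewrite addr0 (eq_bigr (fun=> 1)) => [|x ->]; rewrite ?sumr_const.
Qed.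

End Distance.

Section CompleteMultipartite.
Variables (T : finType) (V : {set T}) (P : {set {set T}}) (e : rel T) (m : nat).
Hypotheses (partP : partition P V) (P_gt1 : (1 < #|P|)%N)
  (sizeP : {in P, forall B : {set T}, #|B| = m})
  (eP : {in V &, forall x y, e x y = (pblock P x != pblock P y)}).
Local Open Scope ring_scope.

Let trivP : trivIset P := partition_trivIset partP.
Let coverP : cover P = V := cover_partition partP.

Lemma card_complete_multipartite : #|V| = (#|P| * m)%N.
Proof. exact: card_uniform_partition. Qed.

Lemma pblock_memV x : x \in V -> pblock P x \in P.
Proof. by rewrite -coverP; apply: pblock_mem. Qed.

Lemma sum_pblock (F : {set T} -> int) x : x \in V ->
  \sum_(c < #|P|) (x \in enum_val c)%:R * F (enum_val c) = F (pblock P x).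
Proof.
move=> xV; rewrite -(big_enum_val (fun B : {set T} => (x \in B)%:R * F B)) /=.
rewrite (bigD1 (pblock P x)) ?pblock_memV //= mem_pblock coverP xV mul1r.
rewrite big1 ?addr0 // => B /andP[PB neB].
have /negbTE -> : x \notin B by apply: contra neB => xB; rewrite (def_pblock trivP PB xB).
by rewrite mul0r.
Qed.

Lemma exists_other_block x : x \in V -> exists2 w, w \in V & pblock P w != pblock P x.
Proof.
move=> xV.
have [B] : exists B, B \in P :\ pblock P x.
  by apply/set0Pn; rewrite -card_gt0; move: P_gt1; rewrite (cardsD1 (pblock P x)) pblock_memV.
rewrite !inE => /andP[neB PB].
have [w wB] := set0Pn _ (partition_neq0 partP PB).
by exists w; [apply: subsetP wB; apply: partitionS partP PB | rewrite (def_pblock trivP PB wB)].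
Qed.

Lemma gdist_complete_multipartite x y : x \in V -> y \in V ->
  gdist V e x y = if x == y then 0%N else if pblock P x == pblock P y then 2%N else 1%N.
Proof.
move=> xV yV.
have m_gt0 : (0 < m)%N.
  by rewrite -(sizeP (pblock_memV xV)) card_gt0; apply/set0Pn; exists x; rewrite mem_pblock coverP.
have V_gt1 : (1 < #|V|)%N by rewrite card_complete_multipartite; nia.
have [<- | nxy] := eqVneq x y; first by apply: gdist_eq => //=; rewrite ?eqxx //; lia.
have [same | diff] := eqVneq (pblock P x) (pblock P y); last first.
  by apply: gdist_eq => [//| |[|//] _ //=]; rewrite walkb1 yV andbT eP.
apply: gdist_eq.
- have : [set x; y] \subset pblock P x.
    by apply/subsetP => z /set2P[]->; last rewrite same; rewrite mem_pblock coverP.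
  move/subset_leq_card; rewrite cards2 nxy sizeP ?pblock_memV // => m_gt1.
  by rewrite card_complete_multipartite; nia.
- have [w wV nwx] := exists_other_block xV.
  apply/existsP; exists w; rewrite wV eP // eq_sym nwx /=.
  by apply/existsP; exists y; rewrite yV eP // -same nwx eqxx.
- move=> [|[|//]] _; first exact: nxy.
  by rewrite walkb1 eP // same eqxx.
Qed.

Definition incidence_mx : 'M[int]_(#|V|, #|P|) :=
  \matrix_(i < #|V|, c < #|P|) (enum_val i \in enum_val c)%:R.

Lemma incidence_mx_const p : incidence_mx *m const_mx 1 = const_mx 1 :> 'M_(#|V|, p).
Proof.
apply/matrixP => i j; rewrite !mxE -[RHS](sum_pblock (fun=> 1) (enum_valP i)).
by apply: eq_bigr => c _; rewrite !mxE.
Qed.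

Lemma incidence_mx_mul_tr : incidence_mx *m incidence_mx^T =
  \matrix_(i, j) (pblock P (enum_val i) == pblock P (enum_val j))%:R.
Proof.
apply/matrixP => i j; rewrite !mxE eq_pblock ?coverP ?enum_valP //.
rewrite -(sum_pblock (fun B => (enum_val j \in B)%:R) (enum_valP i)).
by apply: eq_bigr => c _; rewrite !mxE.
Qed.

Lemma tr_incidence_mx_mul : incidence_mx^T *m incidence_mx = m%:R%:M.
Proof.
apply/matrixP => c d; rewrite !mxE.
have PBc : enum_val c \in P := enum_valP c.
rewrite (eq_bigr (fun i => (enum_val i \in enum_val c :&: enum_val d)%:R)); last first.
  by move=> i _; rewrite !mxE inE -natrM mulnb.
rewrite sum_enum_val_mem; last by rewrite subIset // (partitionS partP PBc).
have [<- | neq_cd] := eqVneq c d; first by rewrite setIid sizeP.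
have /trivIsetP/(_ _ _ PBc (enum_valP d)) : trivIset P by [].
rewrite (inj_eq enum_val_inj) neq_cd => /(_ isT)/disjoint_setI0 ->.
by rewrite cards0.
Qed.

Lemma dist_mx_complete_multipartite i j : dist_mx V e i j =
  1 + (pblock P (enum_val i) == pblock P (enum_val j))%:R - 2 * (i == j)%:R.
Proof.
rewrite mxE gdist_complete_multipartite ?enum_valP // (inj_eq enum_val_inj).
by have [-> | _] := eqVneq i j; [rewrite eqxx | case: eqP].
Qed.

Lemma trans_mx_complete_multipartite : trans_mx V e = ((#|V| + m)%:R - 2)%:M.
Proof.
rewrite /trans_mx -diag_const_mx; congr diag_mx; apply/matrixP => k j; rewrite !mxE.
have xjV : enum_val j \in V := enum_valP j.
under eq_bigr => i _ do
  rewrite dist_mx_complete_multipartite (eq_sym (pblock P _)) eq_pblock ?coverP //.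
rewrite sumrB -mulr_sumr [X in 2 * X](bigD1 j) //= eqxx.
rewrite [X in 2 * (_ + X)]big1 => [|i /negbTE -> //].
rewrite big_split /= sumr_const card_ord sum_enum_val_mem; last first.
  exact: partitionS partP (pblock_memV xjV).
by rewrite (sizeP (pblock_memV xjV)) natrD; ring.
Qed.

Lemma dsl_mx_complete_multipartite : dsl_mx V e =
  ((#|V| + m)%:R - 4)%:M + incidence_mx *m (1%:M + const_mx 1) *m incidence_mx^T.
Proof.
rewrite /dsl_mx trans_mx_complete_multipartite.
rewrite mulmxDr mulmx1 mulmxDl incidence_mx_mul_tr incidence_mx_const.
rewrite -[const_mx 1 *m _]trmxK trmx_mul trmxK trmx_const incidence_mx_const trmx_const.
apply/matrixP => i j; rewrite [LHS]mxE dist_mx_complete_multipartite !mxE.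
by case: (i == j); rewrite /= ?mulr1n ?mulr0n; ring.
Qed.

Lemma block_size_gt0 : (0 < m)%N.
Proof.
have [B PB] : exists B, B \in P by apply/set0Pn; rewrite -card_gt0; lia.
by rewrite -(sizeP PB) card_gt0 (partition_neq0 partP PB).
Qed.

Theorem char_poly_dsl_complete_multipartite (c : int) : c = (#|V| + m)%:R - 4 ->
  char_poly (dsl_mx V e) =
    ('X - c%:P) ^+ (#|V| - #|P|) * ('X - (c + m%:R)%:P) ^+ #|P|.-1 *
    ('X - (c + (m * #|P|.+1)%:R)%:P).
Proof.
move=> c_def; set k := #|P|; set Y := 'X - c%:P; set Z := Y - m%:R.
set U := map_mx polyC incidence_mx; set W : 'M[{poly int}]_k := 1%:M + const_mx 1.
(* Sylvester moves U to the right: W U^T U = m (I + J) is a k x k matrix *)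
have charE : char_poly_mx (dsl_mx V e) = Y%:M - U *m (W *m U^T).
  rewrite /char_poly_mx dsl_mx_complete_multipartite -c_def map_mxD !map_mxM map_trmx.
  rewrite map_scalar_mx map_mxD map_mx1 map_const_mx /= polyC1 mulmxA opprD addrA.
  by rewrite raddfB.
have WUU : W *m U^T *m U = m%:R%:M + const_mx m%:R.
  rewrite -mulmxA /U map_trmx -map_mxM tr_incidence_mx_mul map_scalar_mx /= polyC_natr.
  rewrite mul_mx_scalar scalerDr scale_scalar_mx mulr1.
  by congr (_ + _); apply/matrixP => i j; rewrite !mxE mulr1.
have := det_sylvester U (W *m U^T) Y; rewrite -charE WUU opprD addrA -raddfB /=.
have := det_scalar_sub_const k Z m%:R; rewrite -/Z -/(char_poly _) => detJ sylv.
have ZE : 'X - (c + m%:R)%:P = Z by rewrite polyCD polyC_natr opprD addrA.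
have lastE : 'X - (c + (m * k.+1)%:R)%:P = Z - m%:R *+ k.
  by rewrite polyCD polyC_natr /Z /Y natrM mulrSr -mulr_natr; ring.
have k_gt0 : (0 < k)%N by apply: ltnW.
have le_kV : (k <= #|V|)%N by rewrite card_complete_multipartite leq_pmulr ?block_size_gt0.
have Y_neq0 : Y != 0 by rewrite polyXsubC_eq0.
have Z_neq0 : Z != 0 by rewrite -ZE polyXsubC_eq0.
apply: (@mulIf _ (Y ^+ k * Z)); first by rewrite mulf_neq0 ?expf_neq0.
rewrite mulrA sylv -[LHS]mulrA detJ ZE lastE -{1}(subnK le_kV) exprD.
rewrite -[in Z ^+ k](prednK k_gt0) exprS.
move: (Y ^+ _) (Y ^+ k) (Z ^+ k.-1) (Z - _) => Yl Yk Zk1 L; ring.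
Qed.

End CompleteMultipartite.

(** * Groups whose centre has index four *)

Section CenterIndex.
Variables (gT : finGroupType) (G : {group gT}).
Local Open Scope group_scope.

Lemma eq_rcoset_group (H : {group gT}) x : (H :* x == H) = (x \in H).
Proof. by apply/eqP/idP => [<- | /rcoset_id //]; apply: rcoset_refl. Qed.

Lemma center_proper_subcent1 x : x \in G -> x \notin 'Z(G) -> 'Z(G) \proper 'C_G[x].
Proof.
move=> xG xZ; rewrite properE; apply/andP; split.
  apply/subsetP => z /centerP[zG cGz]; apply/subcent1P; split=> //.
  exact/commute_sym/cGz.
by apply/subsetPn; exists x; rewrite ?subcent1_id.
Qed.

Lemma subcent1_proper x : x \in G -> x \notin 'Z(G) -> 'C_G[x] \proper G.
Proof.
move=> xG; rewrite properE subcent1_sub /=; apply: contra => sGC.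
apply/centerP; split=> // y /(subsetP sGC)/subcent1P[_ //].
Qed.

Lemma index_center_subcent1 x : x \in G -> x \notin 'Z(G) ->
  [/\ 1 < #|G : 'C_G[x]|, 1 < #|'C_G[x] : 'Z(G)|
    & #|G : 'C_G[x]| * #|'C_G[x] : 'Z(G)| = #|G : 'Z(G)|]%N.
Proof.
move=> xG xZ; have := center_proper_subcent1 xG xZ; have := subcent1_proper xG xZ.
rewrite !properE !indexg_gt1 => /andP[sCG ->] /andP[sZC ->].
by split=> //; apply: Lagrange_index.
Qed.

Lemma index_center_ge4 : ~~ abelian G -> (4 <= #|G : 'Z(G)|)%N.
Proof.
move=> ncG; have [x xG xZ] : exists2 x, x \in G & x \notin 'Z(G).
  apply/subsetPn; apply: contra ncG => sGZ; apply/center_idP/eqP.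
  by rewrite eqEsubset center_sub.
have [gt1_GC gt1_CZ <-] := index_center_subcent1 xG xZ; nia.
Qed.

Hypothesis index_le4 : (#|G : 'Z(G)| <= 4)%N.

Lemma commute_rcoset_center x y : x \in G :\: 'Z(G) -> y \in G :\: 'Z(G) ->
  commute x y <-> 'Z(G) :* x = 'Z(G) :* y.
Proof.
move=> /setDP[xG xZ] /setDP[yG yZ]; split => [cxy | eqZxy]; last first.
  have /rcosetP[z /centerP[_ czG] ->] : y \in 'Z(G) :* x by rewrite eqZxy rcoset_refl.
  by apply: commuteM => //; apply/commute_sym/czG.
have [gt1_GC gt1_CZ index_eq] := index_center_subcent1 xG xZ.
have {gt1_GC gt1_CZ index_eq} index2 : #|'C_G[x] : 'Z(G)| = 2 by nia.
(* so the cosets Z, Zx, Zy of Z in C_G[x] cannot be pairwise distinct *)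
have cosetC z : z \in 'C_G[x] -> 'Z(G) :* z \in rcosets 'Z(G) 'C_G[x].
  by move=> zC; rewrite -rcosetE; apply: imset_f.
apply/eqP; apply: contraT => neq_xy.
have : #|'Z(G) |: [set 'Z(G) :* x; 'Z(G) :* y]| <= #|'C_G[x] : 'Z(G)|.
  apply: subset_leq_card; apply/subsetP => B; rewrite !inE => /or3P[] /eqP ->.
  - by rewrite -{1}(rcoset1 'Z(G)) cosetC.
  - exact/cosetC/subcent1_id.
  - exact/cosetC/subcent1P.
rewrite index2 cardsU1 cards2 neq_xy !inE ![_ == 'Z(G) :* _]eq_sym.
by rewrite !eq_rcoset_group (negbTE xZ) (negbTE yZ).
Qed.

Lemma nc_adj_rcoset_center : {in nc_vertices G &, forall x y,
  nc_adj x y = ('Z(G) :* x != 'Z(G) :* y)}.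
Proof.
move=> x y xV yV; rewrite /nc_adj.
have [eq_xy | neq_xy] := eqVneq ('Z(G) :* x) ('Z(G) :* y).
  by rewrite (commute_rcoset_center xV yV).2 // eqxx andbF.
have -> /= : x != y by apply: contra_neq neq_xy => ->.
by apply/negP => /eqP/(commute_rcoset_center xV yV)/eqP; apply/negP.
Qed.

End CenterIndex.

Definition noncentral_cosets (gT : finGroupType) (G : {group gT}) : {set {set gT}} :=
  (rcosets 'Z(G) G :\ 'Z(G))%g.

Section NoncentralCosets.
Variables (gT : finGroupType) (G : {group gT}).
Local Open Scope group_scope.

Lemma center_in_rcosets : 'Z(G) \in rcosets 'Z(G) G.
Proof. by rewrite -{1}(rcoset1 'Z(G)) -rcosetE imset_f. Qed.

Lemma partition_noncentral_cosets : partition (noncentral_cosets G) (nc_vertices G).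
Proof.
exact: partitionD1 (rcosets_partition (center_sub G)) center_in_rcosets.
Qed.

Lemma pblock_noncentral_cosets x : x \in nc_vertices G ->
  pblock (noncentral_cosets G) x = 'Z(G) :* x.
Proof.
move=> /setDP[xG xZ]; apply: def_pblock (rcoset_refl _ _).
  exact: partition_trivIset partition_noncentral_cosets.
by rewrite !inE eq_rcoset_group xZ -rcosetE imset_f.
Qed.

Lemma card_noncentral_cosets : #|noncentral_cosets G| = (#|G : 'Z(G)| - 1)%N.
Proof. by rewrite /indexg (cardsD1 'Z(G) (rcosets _ _)) center_in_rcosets add1n subn1. Qed.

End NoncentralCosets.

Section IndexFourCenter.
Local Open Scope ring_scope.

Theorem char_poly_dsl_nc_index_center4 (gT : finGroupType) (G : {group gT}) (c : int) :
  #|G : 'Z(G)|%g = 4%N -> c = (4 * #|'Z(G)%g|)%:R - 4 ->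
  char_poly (dsl_mx (nc_vertices G) (@nc_adj gT)) =
    ('X - c%:P) ^+ (3 * #|'Z(G)%g| - 3) * ('X - (c + #|'Z(G)%g|%:R)%:P) ^+ 2 *
    ('X - (c + (#|'Z(G)%g| * 4)%:R)%:P).
Proof.
move=> index4 c_def.
have cardV : #|nc_vertices G| = (3 * #|'Z(G)%g|)%N.
  by rewrite cardsD (setIidPr (center_sub G)) -(Lagrange (center_sub G)) index4 mulnS mulnC addKn.
have cardP : #|noncentral_cosets G| = 3%N by rewrite card_noncentral_cosets index4.
have sizeP : {in noncentral_cosets G, forall B : {set gT}, #|B| = #|'Z(G)%g|}.
  by move=> B /setD1P[_ /rcosetsP[x _ ->]]; rewrite card_rcoset.
have adjP : {in nc_vertices G &, forall x y,
    nc_adj x y = (pblock (noncentral_cosets G) x != pblock (noncentral_cosets G) y)}.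
  move=> x y xV yV; rewrite !pblock_noncentral_cosets //.
  by apply: nc_adj_rcoset_center; rewrite ?index4.
have c_eq : c = (#|nc_vertices G| + #|'Z(G)%g|)%:R - 4.
  by rewrite c_def cardV; congr (_%:R - _); lia.
rewrite (char_poly_dsl_complete_multipartite (partition_noncentral_cosets G) _ sizeP adjP c_eq).
  by rewrite cardV cardP.
by rewrite cardP.
Qed.

End IndexFourCenter.

(** * The metacyclic group M_{8n} *)

Lemma expg_double_half (gT : finGroupType) (x : gT) i :
  (x ^+ i = (x ^+ 2) ^+ i./2 * x ^+ odd i)%g.
Proof. by rewrite -expgM -expgD mul2n addnC odd_double_half. Qed.

Section Metacyclic.
Variables (gT : finGroupType) (G : {group gT}) (a b : gT) (n : nat).
Hypotheses (n_gt0 : (1 <= n)%N) (defG : (G :=: <<[set a; b]>>)%g)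
  (a4 : (a ^+ 4 = 1)%g) (b2n : (b ^+ (2 * n) = 1)%g) (conj_ba : (b * a * b^-1 = a^-1)%g)
  (oG : #|G| = (8 * n)%N).
Local Open Scope group_scope.

Lemma mem_a : a \in G. Proof. by rewrite defG mem_gen // !inE eqxx. Qed.
Lemma mem_b : b \in G. Proof. by rewrite defG mem_gen // !inE eqxx orbT. Qed.

Lemma conjg_ab : a ^ b = a^-1.
Proof.
have conj_inv : a^-1 ^ b = a by rewrite -conj_ba conjgE !mulgA mulVg mul1g mulgKV.
by rewrite -{1}(invgK a) conjVg conj_inv.
Qed.

Lemma center_of_commute x : x \in G -> commute x a -> commute x b -> x \in 'Z(G).
Proof.
move=> xG cxa cxb; rewrite inE xG /= defG cent_gen centU !cent_set1 inE.
by apply/andP; split; apply/cent1P; apply: commute_sym.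
Qed.

Lemma expg2_a_center : a ^+ 2 \in 'Z(G).
Proof.
apply: center_of_commute; [by rewrite groupX ?mem_a | exact/commute_sym/commuteX |].
apply/commgP/conjg_fixP.
by apply/eqP; rewrite conjXg conjg_ab expVgn eq_invg_mul -expgD a4.
Qed.

Lemma expg2_b_center : b ^+ 2 \in 'Z(G).
Proof.
apply: center_of_commute; [by rewrite groupX ?mem_b | | exact/commute_sym/commuteX].
apply/commute_sym/commgP/conjg_fixP.
by rewrite conjgM conjg_ab conjVg conjg_ab invgK.
Qed.

Lemma sub_cycles_mul : G \subset <[a]> * <[b]>.
Proof.
rewrite -norm_joinEr; last first.
  by rewrite cycle_subG; apply/normP; rewrite -cycleJ conjg_ab cycleV.
rewrite defG gen_subG; apply/subsetP => x /set2P[] ->.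
  exact/(subsetP (joing_subl _ _))/cycle_id.
exact/(subsetP (joing_subr _ _))/cycle_id.
Qed.

Lemma not_commute_ab : ~ commute a b.
Proof.
move=> cab; have fix_a : a ^ b = a by apply/conjg_fixP/commgP.
have a2 : a ^+ 2 = 1 by rewrite expgS expg1 -{1}fix_a conjg_ab mulVg.
have le_a : (#[a] <= 2)%N by apply: dvdn_leq => //; rewrite order_dvdn a2.
have le_b : (#[b] <= 2 * n)%N by apply: dvdn_leq; [lia | rewrite order_dvdn b2n].
have le_mul : (#|(<[a]> * <[b]>)%g| <= #[a] * #[b])%N.
  by rewrite /order mul_cardG leq_pmulr ?cardG_gt0.
have := leq_trans (subset_leq_card sub_cycles_mul) le_mul; rewrite oG; nia.
Qed.

Lemma rcoset_center_cover x : x \in G ->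
  exists r s : bool, 'Z(G) :* x = 'Z(G) :* (a ^+ r * b ^+ s).
Proof.
move/(subsetP sub_cycles_mul)/mulsgP => [_ _ /cycleP[i ->] /cycleP[j ->] ->].
exists (odd i), (odd j); apply/rcoset_eqP/rcosetP.
have b2jZ : (b ^+ 2) ^+ j./2 \in 'Z(G) by rewrite groupX ?expg2_b_center.
exists ((a ^+ 2) ^+ i./2 * (b ^+ 2) ^+ j./2); first by rewrite groupM // groupX ?expg2_a_center.
rewrite {1}(expg_double_half a i) {1}(expg_double_half b j) !mulgA; congr (_ * _).
have /centerP[_ cZ] := b2jZ.
by rewrite -!mulgA (cZ _ (groupX _ mem_a)).
Qed.

Lemma index_center_le4 : (#|G : 'Z(G)| <= 4)%N.
Proof.
pose coset_of_bits (rs : bool * bool) := 'Z(G) :* (a ^+ rs.1 * b ^+ rs.2).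
have : rcosets 'Z(G) G \subset coset_of_bits @: [set: bool * bool].
  apply/subsetP => _ /rcosetsP[x xG ->]; have [r [s ->]] := rcoset_center_cover xG.
  by apply/imsetP; exists (r, s).
move/subset_leq_card/leq_trans; apply.
by rewrite (leq_trans (leq_imset_card _ _)) // cardsT card_prod card_bool.
Qed.

Lemma index_center_metacyclic : #|G : 'Z(G)| = 4%N.
Proof.
apply/eqP; rewrite eqn_leq index_center_le4 index_center_ge4 //.
by apply/negP => /centsP cG; apply: not_commute_ab; apply: cG; rewrite ?mem_a ?mem_b.
Qed.

Lemma card_center_metacyclic : #|'Z(G)| = (2 * n)%N.
Proof.
have := Lagrange (center_sub G); rewrite index_center_metacyclic oG => card_eq.
by apply/eqP; rewrite -(eqn_pmul2r (isT : (0 < 4)%N)) card_eq; apply/eqP; lia.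
Qed.

End Metacyclic.

Theorem theorem6p6 (gT : finGroupType) (G : {group gT}) (a b : gT) (n : nat) :
  (1 <= n)%N ->
  (G :=: <<[set a; b]>>)%g ->
  (a ^+ 4 = 1)%g -> (b ^+ (2 * n) = 1)%g -> (b * a * b^-1 = a^-1)%g ->
  #|G| = (8 * n)%N ->
  char_poly (dsl_mx (nc_vertices G) (@nc_adj gT)) =
    (('X - ((8 * n - 4)%N%:R : int)%:P) ^+ (3 * (2 * n - 1)) *
     ('X - ((10 * n - 4)%N%:R : int)%:P) ^+ 2 *
     ('X - ((16 * n - 4)%N%:R : int)%:P))%R.
Proof.
move=> n_gt0 defG a4 b2n conj_ba oG.
have cardZ := card_center_metacyclic n_gt0 defG a4 b2n conj_ba oG.
rewrite (char_poly_dsl_nc_index_center4 (c := (8 * n - 4)%N%:R%R)).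
- rewrite cardZ -!natrD.
  by congr (_ ^+ _ * (_ - (_%:R)%:P) ^+ 2 * (_ - (_%:R)%:P))%R; lia.
- exact: index_center_metacyclic n_gt0 defG a4 b2n conj_ba oG.
- by rewrite cardZ natrB ?mulnA //; lia.
Qed.
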